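(* Let $n\ge1$, $k\ge2$, and $\mathcal{K}=\{\kappa_0,\dots,\kappa_{k-1}\}$ a set of size $k$. For the uniform prior $\pi$ on $\mathcal{K}^n$ and the single-target gain function $g_{\rm T}$, $$V_{\rm T}[\pi\triangleright\mathbf{S}]=\frac{1}{k^n}\sum_{\substack{n_0,\dots,n_{k-1}\ge0\\ n_0+\dots+n_{k-1}=n}}\binom{n}{n_0,n_1,\dots,n_{k-1}}\frac{\max(n_0,\dots,n_{k-1})}{n}.$$
   Context: A dataset is $x=(x_0,\dots,x_{n-1})\in\mathcal{K}^n$; its histogram $h(x)$ is the map $\kappa\mapsto|\{i:x_i=\kappa\}|$; $\#z$ is the number of datasets with histogram $z$. Shuffle channel $\mathbf{S}:\mathcal{K}^n\to\mathcal{K}^n$: $\mathbf{S}_{x,y}=1/\#h(x)$ if $h(y)=h(x)$, else $0$. Uniform prior $\pi_x=1/k^n$. Single-target gain function: $\mathcal{W}=\mathcal{K}$, $g_{\rm T}(w,x)=1$ if $x_0=w$, else $0$. Posterior vulnerability: $V_{\rm T}[\pi\triangleright\mathbf{C}]=\sum_{y}\max_{w\in\mathcal{W}}\sum_{x}\pi_x\mathbf{C}_{x,y}g_{\rm T}(w,x)$. The sum in the claim ranges over all tuples of nonnegative integers summing to $n$, and $\binom{n}{n_0,\dots,n_{k-1}}$ is the multinomial coefficient. *)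

From mathcomp Require Import all_boot all_order all_algebra.
Set Implicit Arguments. Unset Strict Implicit. Unset Printing Implicit Defensive.
Import Order.TTheory GRing.Theory Num.Theory.
Local Open Scope ring_scope.

Definition dataset (n k : nat) := (n.-tuple 'I_k)%type.

Definition hist (n k : nat) (x : dataset n k) : {ffun 'I_k -> nat} :=
  [ffun kap => count_mem kap x].

Definition nhist (n k : nat) (z : {ffun 'I_k -> nat}) : nat :=
  #|[set y : dataset n k | hist y == z]|.

Definition shuffle (R : fieldType) (n k : nat) (x y : dataset n k) : R :=
  if hist y == hist x then (nhist n (hist x))%:R^-1 else 0.

Definition uniform_prior (R : fieldType) (n k : nat) (x : dataset n k) : R :=
  ((k ^ n)%N%:R)^-1.

Definition gainT (R : fieldType) (n k : nat) (w : 'I_k) (x : dataset n k) : R :=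
  if ohead x == Some w then 1 else 0.

(* posterior vulnerability
   V[pi |> C] = sum_y max_w sum_x pi_x C_{x,y} g(w,x)
   (max over the finite nonempty set W; all inner sums are >= 0, so the
   fold of Num.max with initial value 0 is the maximum) *)
Definition post_vuln (R : realFieldType) (X Y W : finType)
  (pi : X -> R) (C : X -> Y -> R) (g : W -> X -> R) : R :=
  \sum_(y : Y) \big[Num.max/0]_(w : W) \sum_(x : X) pi x * C x y * g w x.

Definition multinom (n k : nat) (t : 'I_k -> nat) : nat :=
  (n`! %/ \prod_(i < k) (t i)`!)%N.

From mathcomp Require Import all_boot all_order all_algebra.
From mathcomp Require Import ring.
Import Order.TTheory GRing.Theory Num.Theory.
Set Implicit Arguments. Unset Strict Implicit. Unset Printing Implicit Defensive.

(* Splitting the datasets with histogram z according to their first entry gives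
   #z = sum_j #(z - e_j) (over the j with z_j > 0), whence #z = n! / prod_i z_i!
   and, comparing the two factorial formulas, exactly a fraction z_w / n of them
   start with w.  Hence output y of the shuffle contributes (h(y)_w / n) / k^n to
   the guess w, the best guess yields max_w h(y)_w / (n k^n), and grouping the
   outputs y by their histogram produces the multinomial weights. *)

Lemma sum_count_mem (T : finType) (s : seq T) : \sum_(i : T) count_mem i s = size s.
Proof.
elim: s => [|a s IH] /=; first by rewrite big1.
have one_hit : \sum_i (a == i) = 1.
  by rewrite (bigD1 a) //= eqxx big1 // => i; rewrite eq_sym => /negbTE ->.
by rewrite big_split /= IH one_hit.
Qed.

Section Histograms.
Variable k : nat.
Implicit Types (z : {ffun 'I_k -> nat}) (i j : 'I_k).

Lemma sum_hist n (x : dataset n k) : \sum_i hist x i = n.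
Proof.
by under eq_bigr do rewrite ffunE; rewrite sum_count_mem size_tuple.
Qed.

(* Truncated subtraction makes this z itself when z j = 0; every use is guarded by 0 < z j. *)
Definition decr_hist z j : {ffun 'I_k -> nat} := [ffun i => z i - (i == j)].

Lemma hist_cons n j (y : dataset n k) z :
  (hist [tuple of j :: y] == z) = (0 < z j) && (hist y == decr_hist z j).
Proof.
apply/eqP/andP => [<-|[zj /eqP hy]].
  split; first by rewrite ffunE /= eqxx.
  by apply/eqP/ffunP => i; rewrite !ffunE /= eq_sym addKn.
apply/ffunP => i; move: (congr1 (fun f : {ffun _ -> nat} => f i) hy); rewrite !ffunE /= => ->.
by rewrite eq_sym; case: eqP => [->|_]; rewrite ?add1n ?subn1 ?prednK ?subn0.
Qed.

Lemma card_hist_head n z j :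
  #|[set y : dataset n.+1 k | (hist y == z) && (thead y == j)]|
  = (0 < z j) * nhist n (decr_hist z j).
Proof.
rewrite -sum1_card.
rewrite (reindex_onto (fun y : dataset n k => [tuple of j :: y]) (@behead_tuple _ _)) /=;
  last by move=> y; rewrite inE => /andP[_ /eqP <-]; apply/val_inj; case: y => [[]].
have behead_cons (y : dataset n k) : behead_tuple [tuple of j :: y] == y.
  by apply/eqP/val_inj.
under eq_bigl => y do rewrite inE hist_cons /= eqxx behead_cons !andbT.
rewrite /nhist -sum1_card; case: (0 < z j) => /=; last by rewrite big_pred0.
by rewrite mul1n; apply: eq_bigl => y; rewrite inE.
Qed.

Lemma nhistS n z : nhist n.+1 z = \sum_j (0 < z j) * nhist n (decr_hist z j).
Proof.
rewrite /nhist -sum1_card (partition_big (@thead _ _) predT) //=.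
apply: eq_bigr => j _; rewrite -card_hist_head -sum1_card.
by apply: eq_bigl => y; rewrite !inE.
Qed.

Lemma sum_decr_hist n z j :
  0 < z j -> \sum_i z i = n.+1 -> \sum_i decr_hist z j i = n.
Proof.
move=> zj; rewrite (bigD1 j) //= -(prednK zj) addSn => -[<-].
rewrite (bigD1 j) //= ffunE eqxx subn1; congr (_ + _).
by apply: eq_bigr => i /negbTE ne_ij; rewrite ffunE ne_ij subn0.
Qed.

Lemma prod_fact_decr_hist z j : 0 < z j ->
  \prod_i (z i)`! = z j * \prod_i (decr_hist z j i)`!.
Proof.
move=> zj; rewrite (bigD1 j) // [in RHS](bigD1 j) //= ffunE eqxx subn1.
rewrite -{1}(prednK zj) factS prednK // mulnA; congr (_ * _).
by apply: eq_bigr => i /negbTE ne_ij; rewrite ffunE ne_ij subn0.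
Qed.

Lemma nhist_fact n z : \sum_i z i = n -> nhist n z * \prod_i (z i)`! = n`!.
Proof.
elim: n z => [|n IH] z sum_z.
  have z0 i : z i = 0.
    by apply/eqP; move/eqP: sum_z; rewrite sum_nat_eq0 => /forallP; apply.
  rewrite big1 ?muln1 => [|i _]; last by rewrite z0.
  rewrite /nhist (_ : [set y | _] = setT) ?cardsT ?card_tuple ?card_ord //.
  by apply/setP => y; rewrite !inE (tuple0 y); apply/eqP/ffunP => i; rewrite !ffunE z0.
rewrite nhistS big_distrl (eq_bigr (fun j => z j * n`!)) /=.
  by rewrite -big_distrl /= sum_z factS.
move=> j _; case: (posnP (z j)) => [-> //|zj].
by rewrite mul1n (prod_fact_decr_hist zj) -(IH _ (sum_decr_hist zj sum_z)) mulnCA.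
Qed.

Lemma multinomE n z : \sum_i z i = n -> multinom n z = nhist n z.
Proof.
by move=> sum_z; rewrite /multinom -(nhist_fact sum_z) mulnK // prodn_gt0 // => i; exact: fact_gt0.
Qed.

Lemma card_hist_head_mul n z j : \sum_i z i = n.+1 ->
  n.+1 * #|[set y : dataset n.+1 k | (hist y == z) && (thead y == j)]|
  = z j * nhist n.+1 z.
Proof.
move=> sum_z; rewrite card_hist_head; case: (posnP (z j)) => [-> /=|zj]; first by rewrite muln0.
have prod_gt0 : 0 < \prod_i (decr_hist z j i)`!.
  by rewrite prodn_gt0 // => i; exact: fact_gt0.
apply/eqP; rewrite mul1n -(eqn_pmul2r prod_gt0) -mulnA nhist_fact; last exact: sum_decr_hist.
by rewrite -mulnA (mulnCA (z j)) -prod_fact_decr_hist // nhist_fact // factS.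
Qed.

Lemma sum_bigmax_hist n :
  \sum_(y : dataset n k) \max_i hist y i
  = \sum_(t : {ffun 'I_k -> 'I_n.+1} | \sum_(i < k) (t i : nat) == n)
      multinom n (fun i => t i) * \max_i (t i : nat).
Proof.
pose bound_hist (y : dataset n k) : {ffun 'I_k -> 'I_n.+1} := [ffun i => inord (hist y i)].
have bound_histE y i : bound_hist y i = hist y i :> nat.
  by rewrite !ffunE inordK // ltnS -{2}(size_tuple y) count_size.
rewrite (partition_big bound_hist (fun t => \sum_i (t i : nat) == n)) /=; last first.
  by move=> y _; under eq_bigr do rewrite bound_histE; rewrite sum_hist.
apply: eq_bigr => t /eqP sum_t; set z := [ffun i => t i : nat].
have -> : multinom n (fun i => t i) = nhist n z.
  rewrite -multinomE; last by under eq_bigr do rewrite ffunE.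
  by rewrite /multinom; under [in RHS]eq_bigr do rewrite ffunE.
rewrite /nhist -sum_nat_const; apply: eq_big => [y|y /eqP hy].
  rewrite inE; apply/eqP/eqP => hy; apply/ffunP => i.
    by rewrite -bound_histE hy /z ffunE.
  by apply/val_inj; rewrite /= bound_histE hy /z ffunE.
by apply: eq_bigr => i _; rewrite -bound_histE hy.
Qed.
End Histograms.

Local Open Scope ring_scope.

Lemma bigmax_mulr_nat (R : realDomainType) (I : finType) (c : R) (f : I -> nat) :
  0 <= c -> \big[Num.max/0]_(i : I) (c * (f i)%:R) = c * (\max_i f i)%N%:R.
Proof.
move=> c_ge0; apply: (big_rec2 (fun a b => a = c * b%:R)); first by rewrite mulr0.
by move=> i _ m _ ->; rewrite -maxr_pMr // -natr_max maxEnat.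
Qed.

Lemma shuffle_gain_sum (R : realFieldType) n k (y : dataset n.+1 k) (w : 'I_k) :
  \sum_(x : dataset n.+1 k) uniform_prior R x * shuffle R x y * gainT R w x
  = ((k ^ n.+1)%N%:R)^-1 / n.+1%:R * (hist y w)%:R.
Proof.
set N := nhist n.+1 (hist y).
set S := [set x : dataset n.+1 k | (hist x == hist y) && (thead x == w)].
have N_gt0 : (0 < N)%N by apply/card_gt0P; exists y; rewrite inE.
have card_S : #|S|%:R = (hist y w)%:R * N%:R / n.+1%:R :> R.
  rewrite -natrM -card_hist_head_mul ?sum_hist // natrM.
  by rewrite -/S mulrC mulKf ?pnatr_eq0.
have sum_S : (\sum_(x : dataset n.+1 k) (x \in S) = #|S|)%N.
  by rewrite -sum1_card [RHS]big_mkcond.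
transitivity (\sum_(x : dataset n.+1 k)
                ((k ^ n.+1)%N%:R^-1 * N%:R^-1 * (x \in S)%:R : R)).
  apply: eq_bigr => x _; rewrite /uniform_prior /shuffle /gainT inE eq_sym.
  have -> : (ohead x == Some w) = (thead x == w).
    by case/tupleP: x => a x; rewrite theadE.
  case: eqP => [-> | _] /=; last by rewrite mulr0 mul0r mulr0.
  by case: (thead x == w); rewrite ?mulr1 ?mulr0.
rewrite -mulr_sumr -natr_sum sum_S card_S.
rewrite -!mulrA; congr (_ * _); field.
by rewrite -mulrS !pnatr_eq0 -!lt0n N_gt0.
Qed.

Theorem mainTheorem13 (R : realFieldType) (n k : nat) (hn : (1 <= n)%N) (hk : (2 <= k)%N) :
  post_vuln (@uniform_prior R n k) (@shuffle R n k) (@gainT R n k)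
  = ((k ^ n)%N%:R)^-1 *
    \sum_(t : {ffun 'I_k -> 'I_n.+1} | (\sum_(i < k) (t i : nat))%N == n)
       (multinom n (fun i => t i))%:R * ((\max_(i < k) (t i : nat))%N%:R / n%:R).
Proof.
case: n hn => [//|n] _; rewrite /post_vuln.
have weight_ge0 : 0 <= ((k ^ n.+1)%N%:R)^-1 / n.+1%:R :> R.
  by rewrite divr_ge0 ?invr_ge0.
under eq_bigr => y _ do
  rewrite (eq_bigr _ (fun w _ => shuffle_gain_sum R y w)) bigmax_mulr_nat //.
rewrite -mulr_sumr -natr_sum sum_bigmax_hist natr_sum -mulrA !mulr_sumr.
apply: eq_bigr => t _; congr (_ * _).
by rewrite natrM mulrCA (mulrC _^-1).
Qed.
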